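(* Let $\mathbf{x}_{-1}=(\mathbf{x}_2,\dots,\mathbf{x}_p)$ be a zero-mean Gaussian row vector with covariance $\Sigma_{-1,-1}$ having all diagonal entries $1$ and $\Lambda^2_{\min}(\Sigma_{-1,-1})\gg0$. Fix $S\subset\{2,\dots,p\}$ with cardinality ${\rm s}$ and $\lambda^\sharp>0$. Let $w\in\mathbb{R}^{p-1}$ have strictly positive entries with $\|w\|_\infty\le1$, $W:={\rm diag}(w)$, $c^0\in\arg\min\{\|\Sigma_{-1,-1}^{1/2}c\|_2^2:\lambda^\sharp\|(Wc)_{-S}\|_1=1\}$, and $\zeta_j:=0$ for $j\in S$, $\zeta_j:={\rm sign}(c^0_j)$ for $j\notin S$. Suppose $$1-\big(\lambda^{\sharp2}\|\Sigma_{-1,-1}^{-1/2}W\zeta\|_2^2\big)^{-1}\gg0,\qquad \lambda^{\sharp2}\|\Sigma_{-1,-1}^{-1/2}W\zeta\|_2^2=\mathcal{O}(1).$$ Let $\gamma^\sharp\in\mathbb{R}^{p-1}$ satisfy $\gamma^\sharp_{-S}=0$ and $$0<1-\big(\lambda^{\sharp2}\|\Sigma_{-1,-1}^{-1/2}W\zeta\|_2^2\big)^{-1}-\|\Sigma_{-1,-1}^{1/2}\gamma^\sharp_S\|_2^2\gg0 .$$ Define $\gamma^0\in\mathbb{R}^{p-1}$ by $\gamma^0_{-S}:=c^0_{-S}$ and $\mathbf{x}_{-1}\gamma^0:=\mathbf{x}_S\gamma^\sharp_S+(\mathbf{x}_{-S}-\mathbf{x}_S\Sigma_{S,S}^{-1}\Sigma_{S,-S})\gamma^0_{-S}$.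 Then $\mathbf{x}_S\gamma^\sharp_S$ is the projection of $\mathbf{x}_{-1}\gamma^0$ on $\mathbf{x}_S$. Moreover, if $\lambda^\sharp\sqrt{\rm s}\to0$, the pair $(\gamma^\sharp,\lambda^\sharp)$ is eligible, $\gamma^0$ is allowed, $\lambda^\sharp\|\gamma^0\|_1\not\to0$, and in fact $\|\Sigma_{-1,-1}^{1/2}(\gamma^0-\gamma^\sharp)\|_2^2\gg0$.
   Context: Asymptotic framework: all quantities may depend on $n$; limits as $n\to\infty$. ''$a\gg0$'' means $a$ is strictly positive and bounded away from zero (eventually). Vectors in $\mathbb{R}^{p-1}$ are indexed by $\{2,\dots,p\}$; $-S:=\{2,\dots,p\}\setminus S$; $v_S$, $v_{-S}$ are subvectors (or $v$ with the complementary entries set to zero); $\mathbf{x}_S=\{\mathbf{x}_j\}_{j\in S}$, $\mathbf{x}_{-S}=\{\mathbf{x}_j\}_{j\in-S}$; $\Sigma_{S,S}=\mathbb{E}\mathbf{x}_S^T\mathbf{x}_S$, $\Sigma_{S,-S}=\mathbb{E}\mathbf{x}_S^T\mathbf{x}_{-S}$. A pair $(\gamma^\sharp,\lambda^\sharp)$ is eligible (relative to $\gamma^0$) if $\|\Sigma_{-1,-1}(\gamma^\sharp-\gamma^0)\|_\infty\le\lambda^\sharp$ and $\lambda^\sharp\|\gamma^\sharp\|_1\to0$. A vector $\gamma^0$ is allowed if $\Sigma(\gamma^0):=\begin{pmatrix}1&\gamma^{0T}\Sigma_{-1,-1}\\ \Sigma_{-1,-1}\gamma^0&\Sigma_{-1,-1}\end{pmatrix}$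 is positive definite with $\Lambda^2_{\min}(\Sigma(\gamma^0))\gg0$ and $\|\Sigma_{-1,-1}\gamma^0\|_\infty\le1$. *)

From HB Require Import structures.
From mathcomp Require Import all_boot all_order all_algebra.
From mathcomp Require Import all_classical all_reals all_analysis.
Set Implicit Arguments. Unset Strict Implicit. Unset Printing Implicit Defensive.
Import Order.TTheory GRing.Theory Num.Theory.
Import numFieldNormedType.Exports.
Local Open Scope ring_scope.
Local Open Scope classical_set_scope.

(* Vectors of R^{p-1} are column vectors 'cV[R]_k with k = p-1; the index
   i : 'I_k stands for the coordinate i+2 in {2,...,p}. *)

Section Defs.
Variable R : realType.

Definition restr k (A : {set 'I_k}) (v : 'cV[R]_k) : 'cV[R]_k :=
  \col_i (if i \in A then v i 0 else 0).

(* selection matrix P_S : 'M_(#|S|, k), so that P_S *m M *m P_S^T = M_{S,S} *)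
Definition selS k (S : {set 'I_k}) : 'M[R]_(#|S|, k) :=
  \matrix_(i, j) (enum_val i == j)%:R.

Definition subSS k (S : {set 'I_k}) (Sig : 'M[R]_k) : 'M[R]_#|S| :=
  selS S *m Sig *m (selS S)^T.

Definition norm1 k (v : 'cV[R]_k) : R := \sum_i `|v i 0|.
Definition normInf k (v : 'cV[R]_k) : R := \big[Num.max/0]_i `|v i 0|.

(* quadratic form u^T M u  (= || M^{1/2} u ||_2^2 for M psd) *)
Definition qf k (M : 'M[R]_k) (u : 'cV[R]_k) : R := (u^T *m M *m u) 0 0.

Definition posdef k (M : 'M[R]_k) : Prop :=
  forall u : 'cV[R]_k, u != 0 -> 0 < qf M u.
Definition psd k (M : 'M[R]_k) : Prop :=
  forall u : 'cV[R]_k, 0 <= qf M u.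

Definition mineig k (M : 'M[R]_k) : R := inf [set a : R | eigenvalue M a].

Definition diagc k (w : 'cV[R]_k) : 'M[R]_k := diag_mx w^T.

Definition SigmaG k (Sig : 'M[R]_k) (g : 'cV[R]_k) : 'M[R]_(1 + k) :=
  block_mx 1%:M (g^T *m Sig) (Sig *m g) Sig.

Definition bdd_away0 (u : nat -> R) : Prop :=
  exists c : R, 0 < c /\ \forall n \near \oo, c <= u n.
Definition bigO1 (u : nat -> R) : Prop :=
  exists C : R, \forall n \near \oo, `|u n| <= C.
Definition to0 (u : nat -> R) : Prop := u @ \oo --> 0.

(* L2 projection for linear combinations of a centred vector x with
   covariance Sig, identifying x u with the coefficient vector u and using
   E[(x u)(x v)] = u^T Sig v :  x v is the projection of x u on x_S iff
   x v lies in span(x_S) and E[x_S^T (x u - x v)] = 0. *)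
Definition is_proj_on k (Sig : 'M[R]_k) (S : {set 'I_k}) (u v : 'cV[R]_k) : Prop :=
  restr S v = v /\ selS S *m Sig *m (u - v) = 0.

(* gamma^0 : gamma^0_{-S} = c0_{-S},
   x gamma^0 = x_S gs_S + (x_{-S} - x_S Sig_SS^{-1} Sig_{S,-S}) c0_{-S} *)
Definition gamma0 k (Sig : 'M[R]_k) (S : {set 'I_k}) (gs c0 : 'cV[R]_k) : 'cV[R]_k :=
  restr (~: S) c0 + restr S gs
  - (selS S)^T *m invmx (subSS S Sig) *m (selS S *m Sig *m restr (~: S) c0).

Definition zeta k (S : {set 'I_k}) (c0 : 'cV[R]_k) : 'cV[R]_k :=
  \col_j (if j \in S then 0 else Num.sg (c0 j 0)).

Definition is_argmin_c0 k (Sig : 'M[R]_k) (S : {set 'I_k}) (w : 'cV[R]_k)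
  (lam : R) (c0 : 'cV[R]_k) : Prop :=
  lam * norm1 (restr (~: S) (diagc w *m c0)) = 1 /\
  forall c : 'cV[R]_k, lam * norm1 (restr (~: S) (diagc w *m c)) = 1 ->
    qf Sig c0 <= qf Sig c.

End Defs.

From Pilot Require Import Defs.
From HB Require Import structures.
From mathcomp Require Import all_boot all_order all_algebra.
From mathcomp Require Import all_classical all_reals all_analysis.
From mathcomp Require Import ring lra.
Set Implicit Arguments. Unset Strict Implicit. Unset Printing Implicit Defensive.
Import Order.TTheory GRing.Theory Num.Theory.
Import numFieldNormedType.Exports.
Local Open Scope ring_scope.

(** The minimiser [c0] of [c^T Sig c] on the sphere [lam ||(W c)_{-S}||_1 = 1]
   satisfies the first-order condition [Sig c0 = lam m W zeta], where
   [m = c0^T Sig c0]: perturb [c0] along one coordinate and rescale it back onto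
   the sphere.  Hence [Sig c0] vanishes on [S], so the residualisation defining
   [gamma0] leaves [c0] untouched: [gamma0 = c0 + gs], the two summands are
   [Sig]-orthogonal, and [lam^2 ||Sig^{-1/2} W zeta||^2 = 1/m].  All claims then
   reduce to norm estimates: [||Sig (gs - gamma0)||_oo = ||Sig c0||_oo <= lam m];
   the Schur complement [1 - gamma0^T Sig gamma0 = 1 - m - gs^T Sig gs] of
   [Sig] in [Sigma(gamma0)] is bounded away from zero;
   [lam ||gamma0||_1 >= lam ||(W c0)_{-S}||_1 = 1]; and
   [||Sig^{1/2} (gamma0 - gs)||^2 = m]. *)

Section FirstOrder.
Variable R : realFieldType.

Lemma first_order_eq0 (D K T : R) : 0 < T ->
  (forall t, `|t| <= T -> t * D <= t ^+ 2 * K) -> D = 0.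
Proof.
move=> T0 hD; apply/eqP; apply/negPn/negP => D0.
have aD : 0 < `|D| by rewrite normr_gt0.
have K1 : 0 < `|K| + 1 by rewrite ltr_wpDl.
pose tau := Num.min T (`|D| / (`|K| + 1)).
have tau0 : 0 < tau by rewrite /tau lt_min T0 divr_gt0.
have tauT : tau <= T by rewrite /tau ge_min lexx.
have tauD : tau * (`|K| + 1) <= `|D|.
  by rewrite -ler_pdivlMr // /tau ge_min lexx orbT.
have h1 : `|Num.sg D * tau| <= T.
  by rewrite normrM normr_sg D0 mul1r ger0_norm // ltW.
have := hD _ h1.
rewrite exprMn sqr_sg D0 mul1r -mulrA (mulrC tau) mulrA -normrEsg => h.
have hK : K <= `|K| := ler_norm K.
nra.
Qed.

End FirstOrder.

Section QuadraticForm.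
Variable R : realType.

Definition sqnorm k (v : 'cV[R]_k) : R := \sum_i v i 0 ^+ 2.
Definition bform k (M : 'M[R]_k) (u v : 'cV[R]_k) : R := (u^T *m M *m v) 0 0.

Lemma bformC k (M : 'M[R]_k) u v : M^T = M -> bform M u v = bform M v u.
Proof.
move=> sM; have tr11 (A : 'M[R]_1) : A^T 0 0 = A 0 0 by rewrite mxE.
by rewrite /bform -tr11 !trmx_mul trmxK sM mulmxA.
Qed.

Lemma bformZl k (M : 'M[R]_k) a u v : bform M (a *: u) v = a * bform M u v.
Proof. by rewrite /bform linearZ /= -!scalemxAl mxE. Qed.

Lemma bformZr k (M : 'M[R]_k) a u v : bform M u (a *: v) = a * bform M u v.
Proof. by rewrite /bform -scalemxAr mxE. Qed.

Lemma qfD k (M : 'M[R]_k) u v : M^T = M ->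
  qf M (u + v) = qf M u + 2 * bform M u v + qf M v.
Proof.
move=> sM; have add11 (A B : 'M[R]_1) : (A + B) 0 0 = A 0 0 + B 0 0 by rewrite mxE.
rewrite /qf [(u + v)^T]linearD /= !mulmxDl !mulmxDr !add11.
rewrite -/(bform M u v) -/(bform M v u) (bformC u v sM) /bform; ring.
Qed.

Lemma qfZ k (M : 'M[R]_k) a v : qf M (a *: v) = a ^+ 2 * qf M v.
Proof. by rewrite [qf _ _]bformZl bformZr mulrA -expr2. Qed.

Lemma qf0 k (M : 'M[R]_k) : qf M 0 = 0.
Proof. by rewrite /qf mulmx0 mxE. Qed.

Lemma bform_deltal k (M : 'M[R]_k) j u : bform M (delta_mx j 0) u = (M *m u) j 0.
Proof. by rewrite /bform trmx_delta -rowE -row_mul mxE. Qed.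

Lemma qf_delta k (M : 'M[R]_k) j : qf M (delta_mx j 0) = M j j.
Proof. by rewrite [qf _ _]bform_deltal -colE mxE. Qed.

Lemma qf_add_delta k (M : 'M[R]_k) u t j : M^T = M ->
  qf M (u + t *: delta_mx j 0) = qf M u + 2 * t * (M *m u) j 0 + t ^+ 2 * M j j.
Proof.
by move=> sM; rewrite qfD // bformZr bformC // bform_deltal qfZ qf_delta mulrA.
Qed.

Lemma bform_eq0 k (M : 'M[R]_k) (u v : 'cV[R]_k) :
  (forall i, u i 0 = 0 \/ (M *m v) i 0 = 0) -> bform M u v = 0.
Proof.
move=> h; rewrite /bform -mulmxA mxE big1 // => i _.
by rewrite mxE; case: (h i) => ->; rewrite ?mul0r ?mulr0.
Qed.

Lemma sqnorm_qf k (v : 'cV[R]_k) : sqnorm v = qf 1%:M v.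
Proof. by rewrite /qf mulmx1 mxE; apply: eq_bigr => i _; rewrite mxE expr2. Qed.

Lemma sqnormZ k a (v : 'cV[R]_k) : sqnorm (a *: v) = a ^+ 2 * sqnorm v.
Proof. by rewrite !sqnorm_qf qfZ. Qed.

Lemma sqnorm_add_delta k (u : 'cV[R]_k) t j :
  sqnorm (u + t *: delta_mx j 0) = sqnorm u + 2 * t * u j 0 + t ^+ 2.
Proof. by rewrite !sqnorm_qf qf_add_delta ?trmx1 // mul1mx !mxE eqxx mulr1. Qed.

Lemma sqnorm_delta k (j : 'I_k) : sqnorm (delta_mx j 0 : 'cV[R]_k) = 1.
Proof. by rewrite sqnorm_qf qf_delta mxE eqxx. Qed.

Lemma sqnorm_ge0 k (v : 'cV[R]_k) : 0 <= sqnorm v.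
Proof. by apply: sumr_ge0 => i _; exact: sqr_ge0. Qed.

Lemma sqnorm_eq0 k (v : 'cV[R]_k) : sqnorm v = 0 -> v = 0.
Proof.
move=> /eqP; rewrite psumr_eq0 => [/allP h|i _]; last exact: sqr_ge0.
apply/matrixP => i j; rewrite (ord1 j) mxE.
by have := h i (mem_index_enum i); rewrite /= sqrf_eq0 => /eqP.
Qed.

Lemma sqnorm_gt0 k (v : 'cV[R]_k) : v != 0 -> 0 < sqnorm v.
Proof.
move=> v0; rewrite lt_neqAle sqnorm_ge0 andbT eq_sym.
by apply: contra v0 => /eqP/sqnorm_eq0 ->.
Qed.

Lemma sqnorm_eq1_neq0 k (v : 'cV[R]_k) : sqnorm v = 1 -> v != 0.
Proof.
move=> v1; apply/eqP => v0; move: v1.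
by rewrite v0 sqnorm_qf qf0 => /eqP; rewrite eq_sym oner_eq0.
Qed.

Lemma sqnorm_col k (u : 'cV[R]_(1 + k)) :
  sqnorm u = (usubmx u) 0 0 ^+ 2 + sqnorm (dsubmx u).
Proof.
rewrite /sqnorm big_split_ord /= big_ord1; congr (_ + _); first by rewrite mxE.
by apply: eq_bigr => i _; rewrite mxE.
Qed.

Lemma sqnormD_le k (x y : 'cV[R]_k) : sqnorm (x + y) <= 2 * sqnorm x + 2 * sqnorm y.
Proof.
rewrite /sqnorm !mulr_sumr -big_split /=; apply: ler_sum => i _; rewrite mxE.
by have := sqr_ge0 (x i 0 - y i 0); nra.
Qed.

Lemma qf_ge0 k (M : 'M[R]_k) v : posdef M -> 0 <= qf M v.
Proof.
by move=> pd; have [->|/pd/ltW//] := eqVneq v 0; rewrite qf0.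
Qed.

Lemma qf_eq0 k (M : 'M[R]_k) v : posdef M -> qf M v = 0 -> v = 0.
Proof.
by move=> pd h; apply/eqP/negPn/negP => /pd; rewrite h ltxx.
Qed.

Lemma posdef_unitmx k (M : 'M[R]_k) : posdef M -> M \in unitmx.
Proof.
move=> pd; rewrite -row_free_unit -kermx_eq0; apply/negPn/negP.
case/matrix0Pn => i [j nz]; set v := row i (kermx M).
have vM : v *m M = 0 by rewrite /v -row_mul mulmx_ker row0.
have v0 : v^T != 0 by rewrite trmx_eq0; apply/matrix0Pn; exists 0, j; rewrite mxE.
by have := pd _ v0; rewrite /qf trmxK vM mul0mx mxE ltxx.
Qed.

Lemma qf_invmx_mul k (M : 'M[R]_k) u : M^T = M -> M \in unitmx ->
  qf (invmx M) (M *m u) = qf M u.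
Proof. by move=> sM uM; rewrite /qf -mulmxA mulKmx // trmx_mul sM. Qed.

Lemma mulmx_sqr_le_qf k (M : 'M[R]_k) g j : M^T = M -> posdef M ->
  (M *m g) j 0 ^+ 2 <= M j j * qf M g.
Proof.
move=> sM pd; set a := (M *m g) j 0; set d := M j j.
have d0 : 0 < d by rewrite /d -qf_delta; exact/pd/sqnorm_eq1_neq0/sqnorm_delta.
have := mulr_ge0 (ltW d0) (qf_ge0 (g + (- (a / d)) *: delta_mx j 0) pd).
rewrite qf_add_delta // -/a -/d.
have -> : d * (qf M g + 2 * - (a / d) * a + (- (a / d)) ^+ 2 * d) =
  d * qf M g - a ^+ 2 by field; rewrite gt_eqF.
by rewrite subr_ge0.
Qed.

Lemma cV_dim_gt0 k (v : 'cV[R]_k) : v != 0 -> (0 < k)%N.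
Proof. by case: k v => // v; rewrite flatmx0 eqxx. Qed.

End QuadraticForm.

Section Rayleigh.
Local Open Scope classical_set_scope.
Variable R : realType.

Lemma qf_trmx_continuous k (M : 'M[R]_k) : continuous (fun x : 'rV[R]_k => qf M x^T).
Proof.
have -> : (fun x : 'rV[R]_k => qf M x^T) =
    fun x => \sum_l (\sum_i x 0 i * M i l) * x 0 l.
  apply/funext => x; rewrite /qf trmxK mxE; apply: eq_bigr => l _; rewrite !mxE.
  by congr (_ * _); apply: eq_bigr => i _; rewrite mxE.
apply: continuous_big; first exact: add_continuous.
move=> l _ x; apply: (@continuousM _ _ (fun x : 'rV[R]_k => \sum_i x 0 i * M i l)
  (fun x => x 0 l)); last exact: coord_continuous.
move: x; apply: continuous_big; first exact: add_continuous.
move=> i _ x; apply: (@continuousM _ _ (fun x : 'rV[R]_k => x 0 i) (fun=> M i l)).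
  exact: coord_continuous.
exact: cst_continuous.
Qed.

Lemma unit_sphere_compact k : compact [set x : 'rV[R]_k | sqnorm x^T = 1].
Proof.
apply: bounded_closed_compact.
  exists 1; split; first by rewrite num_real.
  move=> r r1 x /= x1; rewrite /Num.Def.normr /= mx_normrE.
  apply/bigmax_leP; split=> [|[i j] _ /=]; first exact: le_trans (ltW r1).
  apply: le_trans (ltW r1); rewrite (ord1 i).
  have : x 0 j ^+ 2 <= 1.
    rewrite -x1 /sqnorm (bigD1 j) //= mxE lerDl.
    by apply: sumr_ge0 => l _; exact: sqr_ge0.
  by rewrite -real_normK ?num_real // expr_le1.
have -> : [set x : 'rV[R]_k | sqnorm x^T = 1] =
    (fun x : 'rV[R]_k => qf 1%:M x^T) @^-1` [set y | y = 1].
  by apply/funext => x; rewrite /= sqnorm_qf.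
have /continuous_closedP := @qf_trmx_continuous k 1%:M.
by apply; exact: closed_eq.
Qed.

Lemma rayleigh_min k (M : 'M[R]_k) : (0 < k)%N ->
  exists2 u, sqnorm u = 1 & forall v, qf M u * sqnorm v <= qf M v.
Proof.
move=> k0; pose A := [set x : 'rV[R]_k | sqnorm x^T = 1].
have A0 : A !=set0.
  by exists (delta_mx 0 (Ordinal k0)); rewrite /A /= trmx_delta sqnorm_delta.
have [c cA cmin] := EVT_min_rV A0 (@unit_sphere_compact k)
  (continuous_subspaceT (qf_trmx_continuous (M := M))).
exists c^T => [|v]; first by move: cA; rewrite inE.
have [->|/sqnorm_gt0 sv] := eqVneq v 0; first by rewrite qf0 sqnorm_qf qf0 mulr0.
have sq : (Num.sqrt (sqnorm v))^-1 ^+ 2 = (sqnorm v)^-1.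
  by rewrite exprVn sqr_sqrtr // ltW.
have yA : ((Num.sqrt (sqnorm v))^-1 *: v)^T \in A.
  by rewrite inE /A /= trmxK sqnormZ sq mulVf // gt_eqF.
by have := cmin _ yA; rewrite !trmxK qfZ sq -ler_pdivlMr // mulrC.
Qed.

Lemma rayleigh_eigenvector k (M : 'M[R]_k) u : M^T = M -> sqnorm u = 1 ->
  (forall v, qf M u * sqnorm v <= qf M v) -> M *m u = qf M u *: u.
Proof.
move=> sM u1 umin; set mu := qf M u.
apply/matrixP => j z; rewrite (ord1 z) [RHS]mxE.
suff : 2 * (mu * u j 0 - (M *m u) j 0) = 0.
  by move/eqP; rewrite mulf_eq0 pnatr_eq0 /= subr_eq0 => /eqP ->.
apply: (@first_order_eq0 _ _ (M j j - mu) 1 ltr01) => t _.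
have := umin (u + t *: delta_mx j 0).
rewrite qf_add_delta // sqnorm_add_delta u1 -/mu.
set a := (M *m u) j 0; set b := u j 0; nra.
Qed.

Lemma mineig_rayleigh k (M : 'M[R]_k) : (0 < k)%N -> M^T = M ->
  exists2 u, sqnorm u = 1 &
    qf M u = mineig M /\ forall v, mineig M * sqnorm v <= qf M v.
Proof.
move=> k0 sM; have [u u1 umin] := rayleigh_min M k0; set mu := qf M u.
have eig : M *m u = mu *: u := rayleigh_eigenvector sM u1 umin.
have mu_eig : eigenvalue M mu.
  apply/eigenvalueP; exists u^T.
    by rewrite -{1}sM -trmx_mul eig linearZ.
  by rewrite trmx_eq0 sqnorm_eq1_neq0.
have mu_le a : eigenvalue M a -> mu <= a.
  move=> /eigenvalueP [v va v0].
  have sv : 0 < sqnorm v^T by rewrite sqnorm_gt0 // trmx_eq0.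
  have := umin v^T; rewrite -/mu [qf M v^T]/qf trmxK va -scalemxAl mxE.
  have -> : (v *m v^T) 0 0 = sqnorm v^T.
    by rewrite mxE; apply: eq_bigr => i _; rewrite !mxE expr2.
  by rewrite ler_pM2r.
have -> : mineig M = mu.
  apply/eqP; rewrite eq_le; apply/andP; split.
    by apply: ge_inf => //; exists mu => x; apply: mu_le.
  by apply: lb_le_inf; [exists mu | move=> x; apply: mu_le].
by exists u.
Qed.

Lemma mineig_le_qf k (M : 'M[R]_k) v : (0 < k)%N -> M^T = M ->
  mineig M * sqnorm v <= qf M v.
Proof. by move=> k0 sM; have [u _ [_]] := mineig_rayleigh k0 sM; apply. Qed.

Lemma mineig_ge k (M : 'M[R]_k) b : (0 < k)%N -> M^T = M ->
  (forall v, b * sqnorm v <= qf M v) -> b <= mineig M.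
Proof.
move=> k0 sM lb; have [u u1 [<- _]] := mineig_rayleigh k0 sM.
by have := lb u; rewrite u1 mulr1.
Qed.

Lemma mineig_le_diag k (M : 'M[R]_k) j : M^T = M -> mineig M <= M j j.
Proof.
move=> sM; have k0 : (0 < k)%N by case: k j M sM => [[]|].
by have := mineig_le_qf (delta_mx j 0) k0 sM; rewrite sqnorm_delta qf_delta mulr1.
Qed.

Lemma mineig_gt0 k (M : 'M[R]_k) : (0 < k)%N -> M^T = M -> posdef M -> 0 < mineig M.
Proof.
move=> k0 sM pd; have [u u1 [<- _]] := mineig_rayleigh k0 sM.
exact/pd/sqnorm_eq1_neq0.
Qed.

End Rayleigh.

Section Support.
Variable R : realType.

Lemma restrE k (A : {set 'I_k}) (v : 'cV[R]_k) i :
  restr A v i 0 = if i \in A then v i 0 else 0.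
Proof. by rewrite mxE. Qed.

Lemma restr_id k (A : {set 'I_k}) (v : 'cV[R]_k) :
  (forall i, i \notin A -> v i 0 = 0) -> restr A v = v.
Proof.
by move=> h; apply/matrixP => i z; rewrite (ord1 z) restrE; case: ifPn => // /h ->.
Qed.

Lemma restrC_eq0 k (S : {set 'I_k}) (v : 'cV[R]_k) :
  restr (~: S) v = 0 -> forall i, i \notin S -> v i 0 = 0.
Proof.
by move=> h i iS; have := congr1 (fun M : 'cV[R]_k => M i 0) h; rewrite /= restrE inE iS mxE.
Qed.

Lemma normInf_ge k (v : 'cV[R]_k) i : `|v i 0| <= normInf v.
Proof. exact: (le_bigmax _ (fun i => `|v i 0|) i). Qed.

Lemma normInf_le k (v : 'cV[R]_k) b : 0 <= b -> (forall i, `|v i 0| <= b) -> normInf v <= b.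
Proof. by move=> b0 h; apply/bigmax_leP. Qed.

Lemma norm1_ge0 k (v : 'cV[R]_k) : 0 <= norm1 v.
Proof. by apply: sumr_ge0 => i _; exact: normr_ge0. Qed.

Lemma normr_sg_subgrad (x t : R) : `|x| + Num.sg x * t <= `|x + t|.
Proof.
rewrite {1}normrEsg -mulrDr (le_trans (ler_norm _)) // normrM normr_sg.
by case: (x != 0); rewrite ?mul1r ?mul0r.
Qed.

Lemma zeta_norm_le1 k (S : {set 'I_k}) (c : 'cV[R]_k) j : `|zeta S c j 0| <= 1.
Proof.
rewrite mxE; case: ifP => _; first by rewrite normr0 ler01.
by rewrite normr_sg; case: (_ != 0); rewrite ?lexx ?ler01.
Qed.

Lemma diagc_mulE k (w c : 'cV[R]_k) i : (diagc w *m c) i 0 = w i 0 * c i 0.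
Proof. by rewrite /diagc mul_diag_mx !mxE. Qed.

End Support.

Section Selection.
Variables (R : realType) (k : nat) (S : {set 'I_k}).

Lemma selS_mulE (v : 'cV[R]_k) i : (selS R S *m v) i 0 = v (enum_val i) 0.
Proof.
rewrite mxE (bigD1 (enum_val i)) //= mxE eqxx mul1r big1 ?addr0 // => j /negbTE ne.
by rewrite mxE eq_sym ne mul0r.
Qed.

Lemma selS_mul_eq0P (v : 'cV[R]_k) : selS R S *m v = 0 <-> {in S, forall i, v i 0 = 0}.
Proof.
split=> [h i iS|h].
  by rewrite -(enum_rankK_in iS iS) -selS_mulE h mxE.
by apply/matrixP => i z; rewrite (ord1 z) selS_mulE mxE h // enum_valP.
Qed.

Lemma trselS_mulE_notin (y : 'cV[R]_#|S|) i : i \notin S -> ((selS R S)^T *m y) i 0 = 0.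
Proof.
move=> iS; rewrite mxE big1 // => l _; rewrite !mxE.
by case: eqP => [e|]; [move: iS; rewrite -e enum_valP | rewrite mul0r].
Qed.

Lemma trselS_mulE_enum (y : 'cV[R]_#|S|) i : ((selS R S)^T *m y) (enum_val i) 0 = y i 0.
Proof.
rewrite mxE (bigD1 i) //= !mxE eqxx mul1r big1 ?addr0 // => l /negbTE ne.
by rewrite !mxE (inj_eq enum_val_inj) ne mul0r.
Qed.

Lemma trselS_mul_inj : injective (fun y : 'cV[R]_#|S| => (selS R S)^T *m y).
Proof.
move=> y1 y2 /= e; apply/matrixP => i z; rewrite (ord1 z).
by rewrite -!trselS_mulE_enum e.
Qed.

Lemma subSS_unitmx (Sig : 'M[R]_k) : posdef Sig -> Defs.subSS S Sig \in unitmx.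
Proof.
move=> pd; apply: posdef_unitmx => u u0.
have : (selS R S)^T *m u != 0.
  by apply: contra u0 => /eqP; rewrite -(mulmx0 _ (selS R S)^T) => /trselS_mul_inj ->.
by move/pd; rewrite /qf /Defs.subSS trmx_mul trmxK !mulmxA.
Qed.

End Selection.

Section Penalty.
Variable R : realType.

Definition penalty k (S : {set 'I_k}) (w c : 'cV[R]_k) : R :=
  norm1 (restr (~: S) (diagc w *m c)).

Variables (k : nat) (S : {set 'I_k}) (w : 'cV[R]_k).

Lemma penaltyZ (a : R) c : 0 <= a -> penalty S w (a *: c) = a * penalty S w c.
Proof.
move=> a0; rewrite /penalty /norm1 mulr_sumr; apply: eq_bigr => i _.
rewrite !restrE !diagc_mulE; case: ifP => _; last by rewrite normr0 mulr0.
by rewrite mxE mulrCA normrM ger0_norm.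
Qed.

Lemma penalty_subgrad c j t : (forall i, 0 <= w i 0) ->
  penalty S w c + w j 0 * zeta S c j 0 * t <= penalty S w (c + t *: delta_mx j 0).
Proof.
move=> w0; rewrite /penalty /norm1 (bigD1 j) //= [X in _ <= X](bigD1 j) //=.
rewrite addrAC lerD //; last first.
  apply: ler_sum => i /negbTE ne.
  by rewrite !restrE !diagc_mulE !mxE ne /= mulr0 addr0.
rewrite !restrE !diagc_mulE !mxE !eqxx mulr1 inE.
case: (boolP (j \in S)) => /= jS; first by rewrite normr0 mulr0 mul0r addr0.
rewrite !normrM (ger0_norm (w0 j)) -mulrA -mulrDr ler_wpM2l //.
exact: normr_sg_subgrad.
Qed.

Lemma penaltyD_supp (c g : 'cV[R]_k) : (forall i, i \notin S -> g i 0 = 0) ->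
  penalty S w (c + g) = penalty S w c.
Proof.
move=> gS; apply: eq_bigr => i _; rewrite !restrE !diagc_mulE inE.
by case: (boolP (i \in S)) => //= iS; rewrite mxE gS // addr0.
Qed.

Lemma penalty_le_norm1 c : normInf w <= 1 -> penalty S w c <= norm1 c.
Proof.
move=> w1; apply: ler_sum => i _; rewrite restrE diagc_mulE.
case: ifP => _; last by rewrite normr0 normr_ge0.
rewrite normrM ler_piMl ?normr_ge0 //; exact: le_trans (normInf_ge w i) w1.
Qed.

End Penalty.

Section ArgminKKT.
Variables (R : realType) (k : nat) (Sig : 'M[R]_k) (S : {set 'I_k}) (lam : R).
Variables (w c0 : 'cV[R]_k).
Hypotheses (Sig_sym : Sig^T = Sig) (Sig_pd : posdef Sig) (lam_gt0 : 0 < lam)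
  (w_ge0 : forall i, 0 <= w i 0) (c0_min : is_argmin_c0 Sig S w lam c0).

Lemma argmin_constraint : lam * penalty S w c0 = 1.
Proof. by case: c0_min. Qed.

Lemma argmin_neq0 : c0 != 0.
Proof.
apply/eqP => c00; have := argmin_constraint.
rewrite c00 /penalty mulmx0 /norm1 big1 => [|i _]; last first.
  by rewrite restrE mxE if_same normr0.
by rewrite mulr0 => /eqP; rewrite eq_sym oner_eq0.
Qed.

Lemma argmin_qf_gt0 : 0 < qf Sig c0.
Proof. exact: Sig_pd argmin_neq0. Qed.

(* By the subgradient bound, [c0 + t e_j] has penalty at least
   [(1 + lam w_j zeta_j t) / lam]; rescale it onto the constraint set and
   compare with the minimiser. *)
Lemma argmin_perturb j t : 0 < 1 + lam * (w j 0 * zeta S c0 j 0) * t ->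
  qf Sig c0 * (1 + lam * (w j 0 * zeta S c0 j 0) * t) ^+ 2 <=
  qf Sig (c0 + t *: delta_mx j 0).
Proof.
move=> pos; set c := c0 + t *: delta_mx j 0.
have lb : 1 + lam * (w j 0 * zeta S c0 j 0) * t <= lam * penalty S w c.
  rewrite -argmin_constraint -!mulrA -mulrDr ler_pM2l //.
  by rewrite mulrA; exact: penalty_subgrad.
have pc : 0 < lam * penalty S w c := lt_le_trans pos lb.
set kap := (lam * penalty S w c)^-1.
have feas : lam * penalty S w (kap *: c) = 1.
  by rewrite penaltyZ ?invr_ge0 ?ltW // mulrCA mulVf ?gt_eqF.
have := proj2 c0_min _ feas; rewrite qfZ => h.
apply: le_trans (_ : qf Sig c0 * (lam * penalty S w c) ^+ 2 <= _).
  by rewrite ler_pM2l ?argmin_qf_gt0 // ler_sqr ?nnegrE // ltW.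
have := ler_wpM2r (ltW (exprn_gt0 2 pc)) h.
by rewrite mulrAC -exprMn mulVf ?gt_eqF // expr1n mul1r.
Qed.

Lemma argmin_kkt : Sig *m c0 = (lam * qf Sig c0) *: (diagc w *m zeta S c0).
Proof.
apply/matrixP => j z; rewrite (ord1 z) [RHS]mxE diagc_mulE.
set a := (Sig *m c0) j 0; set b := lam * (w j 0 * zeta S c0 j 0); set m := qf Sig c0.
suff : 2 * (m * b - a) = 0.
  by move/eqP; rewrite mulf_eq0 pnatr_eq0 /= subr_eq0 => /eqP <-; rewrite /b mulrCA mulrA.
have T0 : 0 < (2 * (`|b| + 1))^-1 by rewrite invr_gt0 mulr_gt0 // ltr_wpDl.
apply: (first_order_eq0 (K := Sig j j - m * b ^+ 2) T0) => t ht.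
have bt : - (1 / 2) <= b * t.
  have : `|t| * (2 * (`|b| + 1)) <= 1 by rewrite -ler_pdivlMr ?mul1r // mulr_gt0 // ltr_wpDl.
  have := ler_norm (- (b * t)); rewrite normrN normrM.
  have := normr_ge0 t; have := normr_ge0 b; nra.
have := argmin_perturb (t := t) (j := j); rewrite qf_add_delta // -/a -/b -/m.
have := argmin_qf_gt0; rewrite -/m; nra.
Qed.

Lemma argmin_kkt_S : {in S, forall i, (Sig *m c0) i 0 = 0}.
Proof. by move=> i iS; rewrite argmin_kkt mxE diagc_mulE mxE iS !mulr0. Qed.

Lemma normInf_argmin : normInf w <= 1 -> normInf (Sig *m c0) <= lam * qf Sig c0.
Proof.
move=> w1; have lm0 : 0 <= lam * qf Sig c0 by rewrite mulr_ge0 ?ltW ?argmin_qf_gt0.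
apply: normInf_le => // i; rewrite argmin_kkt mxE diagc_mulE normrM ger0_norm //.
rewrite ler_piMr // normrM -[1]mulr1 ler_pM ?normr_ge0 ?zeta_norm_le1 //.
exact: le_trans (normInf_ge w i) w1.
Qed.

Lemma argmin_qf_invmx :
  lam ^+ 2 * qf (invmx Sig) (diagc w *m zeta S c0) = (qf Sig c0)^-1.
Proof.
have m0 := argmin_qf_gt0.
have -> : diagc w *m zeta S c0 = (lam * qf Sig c0)^-1 *: (Sig *m c0).
  by rewrite argmin_kkt scalerA mulVf ?scale1r // mulf_neq0 ?gt_eqF.
rewrite qfZ qf_invmx_mul ?posdef_unitmx //; field.
by rewrite !gt_eqF.
Qed.

End ArgminKKT.

Section Gamma0.
Variables (R : realType) (k : nat) (Sig : 'M[R]_k) (S : {set 'I_k}) (gs c : 'cV[R]_k).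
Hypothesis Sig_pd : posdef Sig.

Lemma gamma0_orth : selS R S *m Sig *m (gamma0 Sig S gs c - restr S gs) = 0.
Proof.
rewrite /gamma0 addrAC addrK mulmxBr !mulmxA.
rewrite -[selS R S *m Sig *m (selS R S)^T]/(Defs.subSS S Sig).
by rewrite mulmxV ?subSS_unitmx // mul1mx subrr.
Qed.

Lemma gamma0_is_proj : is_proj_on Sig S (gamma0 Sig S gs c) (restr S gs).
Proof.
split; last exact: gamma0_orth.
by apply: restr_id => i /negbTE iS; rewrite restrE iS.
Qed.

Lemma gamma0_id : (forall i, i \notin S -> gs i 0 = 0) ->
  {in S, forall i, (Sig *m c) i 0 = 0} -> gamma0 Sig S gs c = c + gs.
Proof.
(* [v] vanishes off [S] while [Sig v] vanishes on [S], so [v^T Sig v = 0]. *)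
move=> gs_out cS; set v := gamma0 Sig S gs c - (c + gs).
suff /eqP : v = 0 by rewrite subr_eq0 => /eqP.
have addE (A B : 'cV[R]_k) i : (A + B) i 0 = A i 0 + B i 0 by rewrite mxE.
have oppE (A : 'cV[R]_k) i : (- A) i 0 = - A i 0 by rewrite mxE.
have v_out i : i \notin S -> v i 0 = 0.
  move=> iS; rewrite /v /gamma0 -[(selS R S)^T *m _ *m _]mulmxA.
  rewrite !addE !oppE trselS_mulE_notin // !restrE inE iS gs_out //=.
  by rewrite addE gs_out // if_same oppr0 !addr0 subrr.
have Sv_S : {in S, forall i, (Sig *m v) i 0 = 0}.
  apply/selS_mul_eq0P; have -> : v = (gamma0 Sig S gs c - restr S gs) - c.
    by rewrite /v restr_id // opprD addrA addrAC.
  rewrite mulmxBr mulmxBr mulmxA gamma0_orth sub0r.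
  by have /selS_mul_eq0P -> := cS; rewrite oppr0.
apply: (qf_eq0 Sig_pd); apply: bform_eq0 => i.
by case: (boolP (i \in S)) => iS; [right; exact: Sv_S | left; exact: v_out].
Qed.

End Gamma0.

Section SigmaG.
Variables (R : realType) (k : nat) (Sig : 'M[R]_k) (g : 'cV[R]_k).
Hypotheses (Sig_sym : Sig^T = Sig) (Sig_pd : posdef Sig).

Lemma SigmaG_sym : (SigmaG Sig g)^T = SigmaG Sig g.
Proof. by rewrite /SigmaG tr_block_mx tr_scalar_mx !trmx_mul trmxK Sig_sym. Qed.

Lemma qf_SigmaG (u : 'cV[R]_(1 + k)) : qf (SigmaG Sig g) u =
  qf Sig ((usubmx u) 0 0 *: g + dsubmx u) + (usubmx u) 0 0 ^+ 2 * (1 - qf Sig g).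
Proof.
have add11 (A B : 'M[R]_1) : (A + B) 0 0 = A 0 0 + B 0 0 by rewrite mxE.
have scale11 a (A : 'M[R]_1) : (a *: A) 0 0 = a * A 0 0 by rewrite mxE.
have scalar11 (a : R) : (a%:M : 'M[R]_1) 0 0 = a by rewrite mxE eqxx mulr1n.
rewrite -[u]vsubmxK col_mxKu col_mxKd.
set v := dsubmx u; rewrite [usubmx u]mx11_scalar; set a := usubmx u 0 0.
rewrite qfD // qfZ bformZl /qf /SigmaG tr_col_mx tr_scalar_mx mul_row_block mul_row_col.
rewrite !mul_scalar_mx !mul_mx_scalar !add11 !scale11 mulmxDl -scalemxAl !add11 !scale11.
rewrite !scalar11 !mulmxA -/(bform Sig v g) -/(bform Sig g v) (bformC g v Sig_sym).
rewrite -/(qf Sig v) -/(qf Sig g); ring.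
Qed.

Lemma SigmaG_posdef : qf Sig g < 1 -> posdef (SigmaG Sig g).
Proof.
move=> g1 u u0; rewrite qf_SigmaG; set a := usubmx u 0 0; set v := dsubmx u.
have [a0|a0] := eqVneq a 0.
  rewrite a0 scale0r add0r expr0n mul0r addr0; apply: Sig_pd.
  apply: contra u0 => /eqP v0; rewrite -[u]vsubmxK -/v v0 [usubmx u]mx11_scalar -/a a0.
  by rewrite -scalemx1 scale0r col_mx0.
have := qf_ge0 (a *: g + v) Sig_pd.
have : 0 < a ^+ 2 * (1 - qf Sig g) by rewrite mulr_gt0 ?subr_gt0 // exprn_even_gt0.
lra.
Qed.

(* Writing [u = (a, v)]: [|v|^2 <= 2 |a g + v|^2 + 2 a^2 |g|^2] and
   [L |g|^2 <= g^T Sig g <= 1]. *)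
Lemma qf_SigmaG_ge (L c : R) : 0 < L <= 1 -> (forall v, L * sqnorm v <= qf Sig v) ->
  0 < c <= 1 - qf Sig g -> forall u, L * c / 4 * sqnorm u <= qf (SigmaG Sig g) u.
Proof.
move=> /andP [L0 L1] coer /andP [c0 cg] u; rewrite qf_SigmaG sqnorm_col.
set a := usubmx u 0 0; set v := dsubmx u; set X := sqnorm (a *: g + v).
have qg0 := qf_ge0 g Sig_pd.
have Lg : L * sqnorm g <= 1 by apply: le_trans (coer g) _; lra.
have hv : sqnorm v <= 2 * X + 2 * (a ^+ 2 * sqnorm g).
  have -> : v = (a *: g + v) + (- a) *: g by rewrite scaleNr addrAC subrr add0r.
  by apply: le_trans (sqnormD_le _ _) _; rewrite sqnormZ sqrrN.
have hX : L * X <= qf Sig (a *: g + v) := coer _.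
have A0 : 0 <= a ^+ 2 := sqr_ge0 a.
have X0 : 0 <= X := sqnorm_ge0 _.
have G0 : 0 <= sqnorm g := sqnorm_ge0 _.
have hLv : L * sqnorm v <= 2 * (L * X) + 2 * a ^+ 2.
  by have := ler_wpM2l (ltW L0) hv; move: Lg; nra.
have hc : c * a ^+ 2 <= a ^+ 2 * (1 - qf Sig g) by rewrite mulrC ler_wpM2l.
have c1 : c <= 1 by lra.
have p1 := ler_wpM2l (ltW c0) hLv.
have p2 : L * (c * a ^+ 2) <= c * a ^+ 2.
  by rewrite -[X in _ <= X]mul1r ler_wpM2r // mulr_ge0 // ltW.
have p3 : c * (L * X) <= L * X.
  by rewrite -[X in _ <= X]mul1r ler_wpM2r // mulr_ge0 // ltW.
nra.
Qed.

Lemma mineig_SigmaG_ge : (0 < k)%N -> mineig Sig <= 1 -> qf Sig g < 1 ->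
  mineig Sig * (1 - qf Sig g) / 4 <= mineig (SigmaG Sig g).
Proof.
move=> k0 L1 g1; apply: mineig_ge => //; first exact: SigmaG_sym.
apply: qf_SigmaG_ge => [|v|]; last by rewrite lexx andbT subr_gt0.
  by rewrite L1 andbT mineig_gt0.
exact: mineig_le_qf.
Qed.

End SigmaG.

Section Norms.
Variable R : realType.

Lemma normInf_mulmx_le1 k (Sig : 'M[R]_k) g : Sig^T = Sig -> posdef Sig ->
  (forall i, Sig i i = 1) -> qf Sig g <= 1 -> normInf (Sig *m g) <= 1.
Proof.
move=> sS pd d1 g1; apply: normInf_le => // i.
have := le_trans (mulmx_sqr_le_qf g i sS pd) (_ : _ <= 1); rewrite d1 mul1r => /(_ g1).
by rewrite -real_normK ?num_real // expr_le1.
Qed.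

(* AM-GM: [|x_i| <= r/2 x_i^2 + 1/(2r)] with [r ^+ 2 = #|S|]. *)
Lemma norm1_le_sqrt_card k (S : {set 'I_k}) (x : 'cV[R]_k) :
  (forall i, i \notin S -> x i 0 = 0) ->
  norm1 x <= Num.sqrt (#|S|%:R) / 2 * (1 + sqnorm x).
Proof.
move=> xS; set r := Num.sqrt (#|S|%:R).
have r0 : 0 <= r := sqrtr_ge0 _.
have n1 : norm1 x = \sum_(i in S) `|x i 0|.
  rewrite /norm1 (bigID (fun i => i \in S)) /= [X in _ + X]big1 ?addr0 // => i iS.
  by rewrite xS ?normr0.
have [S0|S_gt0] := posnP #|S|.
  rewrite n1 big1 ?mulr_ge0 ?divr_ge0 ?addr_ge0 ?sqnorm_ge0 // => i iS.
  by move: S0 => /eqP; rewrite cards_eq0 => /eqP S0; move: iS; rewrite S0 inE.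
have rp : 0 < r by rewrite sqrtr_gt0 ltr0n.
have rr : r ^+ 2 = #|S|%:R by rewrite sqr_sqrtr // ler0n.
have amgm i : `|x i 0| <= r / 2 * x i 0 ^+ 2 + (2 * r)^-1.
  rewrite -(@ler_pM2l _ (2 * r)) ?mulr_gt0 // mulrDr mulfV ?gt_eqF ?mulr_gt0 //.
  have := sqr_ge0 (r * `|x i 0| - 1); rewrite -[x i 0 ^+ 2]real_normK ?num_real //.
  by move: (normr_ge0 (x i 0)); nra.
have sqS : \sum_(i in S) x i 0 ^+ 2 <= sqnorm x.
  rewrite /sqnorm [X in _ <= X](bigID (fun i => i \in S)) /= lerDl.
  by apply: sumr_ge0 => i _; exact: sqr_ge0.
rewrite n1; apply: le_trans (ler_sum _ (fun i _ => amgm i)) _.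
rewrite big_split /= -mulr_sumr sumr_const -[(_^-1) *+ #|S|]mulr_natr -rr.
have -> : (2 * r)^-1 * r ^+ 2 = r / 2 by field; rewrite gt_eqF.
by have := ler_wpM2l (divr_ge0 r0 (ler0n _ 2)) sqS; lra.
Qed.

End Norms.

Section Asymptotics.
Local Open Scope classical_set_scope.
Variable R : realType.
Implicit Types u v : nat -> R.

Lemma bdd_away0_ge u v (a : R) : bdd_away0 u -> 0 < a ->
  (forall n, a * u n <= v n) -> bdd_away0 v.
Proof.
move=> [c [c0 uc]] a0 uv; exists (a * c); split; first exact: mulr_gt0.
by apply: filterS uc => n cu; apply: le_trans (uv n); rewrite ler_pM2l.
Qed.

Lemma bdd_away0M u v : bdd_away0 u -> bdd_away0 v -> bdd_away0 (fun n => u n * v n).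
Proof.
move=> [a [a0 ua]] [b [b0 vb]]; exists (a * b); split; first exact: mulr_gt0.
by apply: filterS2 ua vb => n au bv; apply: ler_pM => //; exact: ltW.
Qed.

Lemma bigO1_bdd_away0V u : (forall n, 0 < u n) -> bigO1 u ->
  bdd_away0 (fun n => (u n)^-1).
Proof.
move=> u0 [C uC]; exists (Num.max C 1)^-1; split; first by rewrite invr_gt0 lt_max ltr01 orbT.
apply: filterS uC => n un; rewrite lef_pV2 ?posrE ?lt_max ?ltr01 ?orbT //.
by apply: le_trans (ler_norm _) (le_trans un _); rewrite le_max lexx.
Qed.

Lemma to0_le u v (K : R) : (\forall n \near \oo, 0 <= v n <= K * u n) -> to0 u -> to0 v.
Proof.
move=> uv u0; apply: (@squeeze_cvgr _ _ _ _ (fun=> 0) (fun n => K * u n)) => //.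
  exact: cvg_cst.
by have := cvgMl_tmp (a := K) u0; rewrite mulr0; apply.
Qed.

Lemma not_to0 u : (forall n, 1 <= u n) -> ~ to0 u.
Proof.
move=> u1 /cvgrPdist_lt /(_ _ ltr01) /filter_ex [n]; rewrite sub0r normrN.
by have := ler_norm (u n); have := u1 n; lra.
Qed.

End Asymptotics.

Section Gamma0Argmin.
Variables (R : realType) (k : nat) (Sig : 'M[R]_k) (S : {set 'I_k}) (lam : R).
Variables (w c0 gs : 'cV[R]_k).
Hypotheses (Sig_sym : Sig^T = Sig) (Sig_pd : posdef Sig) (lam_gt0 : 0 < lam)
  (w_ge0 : forall i, 0 <= w i 0) (c0_min : is_argmin_c0 Sig S w lam c0)
  (gs_offS : restr (~: S) gs = 0).

Let gs_out : forall i, i \notin S -> gs i 0 = 0 := restrC_eq0 gs_offS.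
Let kkt_S := argmin_kkt_S Sig_sym Sig_pd lam_gt0 w_ge0 c0_min.

Lemma gamma0_argmin : gamma0 Sig S gs c0 = c0 + gs.
Proof. exact: gamma0_id Sig_pd gs_out kkt_S. Qed.

Lemma qf_gamma0_argmin : qf Sig (gamma0 Sig S gs c0) = qf Sig c0 + qf Sig gs.
Proof.
rewrite gamma0_argmin qfD // bformC // bform_eq0 ?mulr0 ?addr0 // => i.
by case: (boolP (i \in S)) => iS; [right; exact: kkt_S | left; exact: gs_out].
Qed.

Lemma gamma0_eligible : normInf w <= 1 -> qf Sig (gamma0 Sig S gs c0) <= 1 ->
  normInf (Sig *m (gs - gamma0 Sig S gs c0)) <= lam.
Proof.
move=> w1 g1; have qgs := qf_ge0 gs Sig_pd.
have m1 : qf Sig c0 <= 1 by move: g1; rewrite qf_gamma0_argmin; lra.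
rewrite gamma0_argmin opprD addrCA subrr addr0 mulmxN; apply: normInf_le => [|i].
  exact: ltW.
rewrite mxE normrN; apply: le_trans (normInf_ge _ i) _.
apply: le_trans (normInf_argmin Sig_sym Sig_pd lam_gt0 w_ge0 c0_min w1) _.
by rewrite ler_piMr // ltW.
Qed.

Lemma norm1_gamma0_ge1 : normInf w <= 1 -> 1 <= lam * norm1 (gamma0 Sig S gs c0).
Proof.
move=> w1; rewrite -(argmin_constraint c0_min) gamma0_argmin ler_pM2l //.
by rewrite -(@penaltyD_supp _ _ S w c0 gs gs_out); exact: penalty_le_norm1.
Qed.

Lemma qf_gamma0_subr : qf Sig (gamma0 Sig S gs c0 - gs) =
  (lam ^+ 2 * qf (invmx Sig) (diagc w *m zeta S c0))^-1.
Proof. by rewrite gamma0_argmin addrK argmin_qf_invmx ?invrK. Qed.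

Lemma norm1_gs_le (c : R) : 0 < c <= mineig Sig -> qf Sig (gamma0 Sig S gs c0) <= 1 ->
  lam * norm1 gs <= (1 + c^-1) / 2 * (lam * Num.sqrt (#|S|%:R)).
Proof.
move=> /andP [c_gt0 cL] g1.
have k0 := cV_dim_gt0 (argmin_neq0 c0_min).
have sq : sqnorm gs <= c^-1.
  rewrite -(ler_pM2l c_gt0) mulfV ?gt_eqF //.
  apply: le_trans (ler_wpM2r (sqnorm_ge0 _) cL) (le_trans (mineig_le_qf _ k0 Sig_sym) _).
  by move: g1; rewrite qf_gamma0_argmin; have := argmin_qf_gt0 Sig_pd c0_min; lra.
have := norm1_le_sqrt_card gs_out; set r := Num.sqrt _ => n1.
have -> : (1 + c^-1) / 2 * (lam * r) = lam * (r / 2 * (1 + c^-1)) by ring.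
rewrite ler_pM2l //; apply: le_trans n1 _.
by rewrite ler_wpM2l ?divr_ge0 ?sqrtr_ge0 // lerD2l.
Qed.

End Gamma0Argmin.

Theorem lemma3p10 (R : realType) (d : nat -> nat)
  (Sig : forall n, 'M[R]_(d n))
  (S : forall n, {set 'I_(d n)})
  (lam : nat -> R)
  (w : forall n, 'cV[R]_(d n))
  (c0 : forall n, 'cV[R]_(d n))
  (gs : forall n, 'cV[R]_(d n)) :
  (* covariance of the zero-mean Gaussian vector x_{-1} *)
  (forall n, (Sig n)^T = Sig n) ->
  (forall n, posdef (Sig n)) ->
  (forall n (i : 'I_(d n)), Sig n i i = 1) ->
  bdd_away0 (fun n => mineig (Sig n)) ->
  (forall n, 0 < lam n) ->
  (forall n (i : 'I_(d n)), 0 < w n i 0) ->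
  (forall n, normInf (w n) <= 1) ->
  (forall n, is_argmin_c0 (Sig n) (S n) (w n) (lam n) (c0 n)) ->
  let Q := fun n => lam n ^+ 2 *
      qf (invmx (Sig n)) (diagc (w n) *m zeta (S n) (c0 n)) in
  bdd_away0 (fun n => 1 - (Q n)^-1) ->
  bigO1 Q ->
  (forall n, restr (~: S n) (gs n) = 0) ->
  (forall n, 0 < 1 - (Q n)^-1 - qf (Sig n) (restr (S n) (gs n))) ->
  bdd_away0 (fun n => 1 - (Q n)^-1 - qf (Sig n) (restr (S n) (gs n))) ->
  let g0 := fun n => gamma0 (Sig n) (S n) (gs n) (c0 n) in
  (forall n, is_proj_on (Sig n) (S n) (g0 n) (restr (S n) (gs n))) /\
  (to0 (fun n => lam n * Num.sqrt (#|S n|%:R)) ->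
     (* (gs, lam) eligible relative to g0 *)
     ((forall n, normInf (Sig n *m (gs n - g0 n)) <= lam n) /\
      to0 (fun n => lam n * norm1 (gs n))) /\
     (* g0 allowed *)
     ((forall n, posdef (SigmaG (Sig n) (g0 n))) /\
      bdd_away0 (fun n => mineig (SigmaG (Sig n) (g0 n))) /\
      (forall n, normInf (Sig n *m g0 n) <= 1)) /\
     ~ to0 (fun n => lam n * norm1 (g0 n)) /\
     bdd_away0 (fun n => qf (Sig n) (g0 n - gs n))).
Proof.
move=> Sig_sym Sig_pd Sig_diag eig_bdd lam_gt0 w_gt0 w_le1 c0_min Q _ Q_bdd gs_offS
  gap_gt0 gap_bdd g0.
have w_ge0 n i : 0 <= w n i 0 := ltW (w_gt0 n i).
have k0 n : (0 < d n)%N := cV_dim_gt0 (argmin_neq0 (c0_min n)).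
have gsS n : restr (S n) (gs n) = gs n := restr_id (restrC_eq0 (gs_offS n)).
have Q0 n : 0 < Q n.
  by rewrite /Q argmin_qf_invmx // invr_gt0 (argmin_qf_gt0 (Sig_pd n) (c0_min n)).
have qg0 n :=
  qf_gamma0_argmin (Sig_sym n) (Sig_pd n) (lam_gt0 n) (w_ge0 n) (c0_min n) (gs_offS n).
have gap n : 1 - qf (Sig n) (g0 n) = 1 - (Q n)^-1 - qf (Sig n) (restr (S n) (gs n)).
  by rewrite qg0 /Q argmin_qf_invmx // invrK gsS opprD addrA.
have g1 n : qf (Sig n) (g0 n) < 1 by rewrite -subr_gt0 gap; exact: gap_gt0.
split=> [n|Hto]; first exact: gamma0_is_proj.
split; [split|split; [split; [|split]|split]].
- by move=> n; apply: gamma0_eligible => //; exact: ltW.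
- have [c [c_gt0 Hc]] := eig_bdd.
  apply: (to0_le (K := (1 + c^-1) / 2)) Hto; apply: filterS Hc => n cL.
  rewrite mulr_ge0 ?norm1_ge0 ?(ltW (lam_gt0 n)) //=.
  by apply: norm1_gs_le => //; [rewrite c_gt0 | exact: ltW].
- by move=> n; exact: SigmaG_posdef.
- apply: (bdd_away0_ge (bdd_away0M eig_bdd gap_bdd) (a := 4^-1)) => // n.
  rewrite -gap mulrC; apply: mineig_SigmaG_ge => //.
  by have := mineig_le_diag (Ordinal (k0 n)) (Sig_sym n); rewrite Sig_diag.
- by move=> n; apply: normInf_mulmx_le1 => //; exact: ltW.
- by apply: not_to0 => n; exact: norm1_gamma0_ge1.
- apply: (bdd_away0_ge (bigO1_bdd_away0V Q0 Q_bdd) (a := 1)) => // n.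
  by rewrite mul1r (qf_gamma0_subr (Sig_sym n) (Sig_pd n) (lam_gt0 n) (w_ge0 n) (c0_min n)).
Qed.
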